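(* Consider the two-species BGK system described in the context, under the assumptions listed there. Let $(f_1,f_2)$ be a classical solution with positive initial data $f_1^0,f_2^0>0$. Then $f_1,f_2>0$.
   Context: Fix $N\ge1$, masses $m_1,m_2>0$, $\varepsilon\in(0,1]$, $\alpha\in[0,1]$, $\delta$ with $\frac{\frac{m_1}{m_2}\varepsilon-1}{1+\frac{m_1}{m_2}\varepsilon}\le\delta\le 1$, and $\gamma$ with $0\le\gamma\le\frac{m_1}{N}(1-\delta)\big[(1+\frac{m_1}{m_2}\varepsilon)\delta+1-\frac{m_1}{m_2}\varepsilon\big]$. For $f_k(x,v,t)$ define $n_k=\int f_k\,dv$, $n_ku_k=\int vf_k\,dv$, $Nn_kT_k=\int m_k|v-u_k|^2f_k\,dv$, and $u_{12}=\delta u_1+(1-\delta)u_2$, $u_{21}=u_2-\frac{m_1}{m_2}\varepsilon(1-\delta)(u_2-u_1)$, $T_{12}=\alpha T_1+(1-\alpha)T_2+\gamma|u_1-u_2|^2$, $T_{21}=\big[\frac1N\varepsilon m_1(1-\delta)(\frac{m_1}{m_2}\varepsilon(\delta-1)+\delta+1)-\varepsilon\gamma\big]|u_1-u_2|^2+\varepsilon(1-\alpha)T_1+(1-\varepsilon(1-\alpha))T_2$. Maxwellians: $M_k=\frac{n_k}{(2\pi T_k/m_k)^{N/2}}e^{-\frac{|v-u_k|^2}{2T_k/m_k}}$, $M_{12}=\frac{n_1}{(2\pi T_{12}/m_1)^{N/2}}e^{-\frac{|v-u_{12}|^2}{2T_{12}/m_1}}$, $M_{21}=\frac{n_2}{(2\pi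 T_{21}/m_2)^{N/2}}e^{-\frac{|v-u_{21}|^2}{2T_{21}/m_2}}$. The system is $\partial_tf_1+v\cdot\nabla_xf_1=\nu_{11}n_1(M_1-f_1)+\nu_{12}n_2(M_{12}-f_1)$, $\partial_tf_2+v\cdot\nabla_xf_2=\nu_{22}n_2(M_2-f_2)+\nu_{21}n_1(M_{21}-f_2)$, $f_k(t=0)=f_k^0$. Assumptions: (1) periodicity in $x$ with periods $a_1,\dots,a_N>0$ for solutions and initial data, spatial domain $\Lambda=\{x: x_i\in(0,a_i)\}$; (2) $f_k^0\ge0$, $(1+|v|^2)f_k^0\in L^1(\Lambda\times\mathbb{R}^N)$, $\int\!\!\int f_k^0\,dv\,dx=1$; (3) $\sup_{x,v}f_k^0(x,v)(1+|v|^q)=\frac12A_0<\infty$ for some $q>N+2$; (4) $\gamma_k(x,t):=\int f_k^0(x-vt,v)\,dv\ge C_0>0$ for all $t$; (5) $\nu_{jk}n_k=\tilde\nu_{jk}\frac{n_k}{n_1+n_2}$ with constants $\tilde\nu_{jk}>0$. *)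

From HB Require Import structures.
From mathcomp Require Import all_boot all_order all_algebra.
From mathcomp Require Import all_classical all_reals all_analysis.
Set Implicit Arguments. Unset Strict Implicit. Unset Printing Implicit Defensive.
Import Order.TTheory GRing.Theory Num.Theory.
Import numFieldNormedType.Exports.
Local Open Scope classical_set_scope.
Local Open Scope ring_scope.

Section BGKDefs.
Context {R : realType}.

Definition sqn (n : nat) (v : 'rV[R]_n) : R := \sum_i (v 0 i) ^+ 2.
Definition enorm (n : nat) (v : 'rV[R]_n) : R := Num.sqrt (sqn v).
Definition ebase (n : nat) (i : 'I_n) : 'rV[R]_n := delta_mx 0 i.

(* Lebesgue integral over R^n of a real function, written as an iterated
   integral dv_1 ... dv_n (equal to the n-dimensional Lebesgue integral for
   integrable functions by Fubini). *)
Fixpoint iint (n : nat) : ('rV[R]_n -> R) -> R :=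
  match n return ('rV[R]_n -> R) -> R with
  | 0 => fun g => g 0
  | n'.+1 => fun g => Rintegral (@lebesgue_measure R) setT
      (fun a : R => iint (fun w : 'rV[R]_n' => g (row_mx (a%:M : 'rV[R]_1) w)))
  end.

(* Extended-valued iterated integral of a nonnegative function on R^n
   (= Lebesgue integral by Tonelli). *)
Fixpoint iintE (n : nat) : ('rV[R]_n -> \bar R) -> \bar R :=
  match n return ('rV[R]_n -> \bar R) -> \bar R with
  | 0 => fun g => g 0
  | n'.+1 => fun g => (\int[@lebesgue_measure R]_(a in setT)
      iintE (fun w : 'rV[R]_n' => g (row_mx (a%:M : 'rV[R]_1) w)))%E
  end.

Definition box (n : nat) (a : 'I_n -> R) : set 'rV[R]_n :=
  [set x | forall i, 0 < x 0 i < a i].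

(* macroscopic quantities of g = f_k(x,.,t) : R^N -> R, species mass m *)
Definition dens (n : nat) (g : 'rV[R]_n -> R) : R := iint g.
Definition veloc (n : nat) (g : 'rV[R]_n -> R) : 'rV[R]_n :=
  (dens g)^-1 *: \row_i iint (fun v => v 0 i * g v).
Definition temp (n : nat) (m : R) (g : 'rV[R]_n -> R) : R :=
  (n%:R * dens g)^-1 * iint (fun v => m * sqn (v - veloc g) * g v).

Definition maxw (n : nat) (m nn T : R) (u v : 'rV[R]_n) : R :=
  nn / ((2 * pi * T / m) `^ (n%:R / 2))
     * expR (- sqn (v - u) / (2 * T / m)).

Definition u12 (n : nat) (delta : R) (u1 u2 : 'rV[R]_n) : 'rV[R]_n :=
  delta *: u1 + (1 - delta) *: u2.
Definition u21 (n : nat) (m1 m2 eps delta : R) (u1 u2 : 'rV[R]_n) : 'rV[R]_n :=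
  u2 - (m1 / m2 * eps * (1 - delta)) *: (u2 - u1).
Definition T12 (n : nat) (alpha gamma : R) (u1 u2 : 'rV[R]_n) (T1 T2 : R) : R :=
  alpha * T1 + (1 - alpha) * T2 + gamma * sqn (u1 - u2).
Definition T21 (n : nat) (m1 m2 eps alpha delta gamma : R)
    (u1 u2 : 'rV[R]_n) (T1 T2 : R) : R :=
  ((n%:R)^-1 * eps * m1 * (1 - delta)
      * (m1 / m2 * eps * (delta - 1) + delta + 1) - eps * gamma) * sqn (u1 - u2)
  + eps * (1 - alpha) * T1 + (1 - eps * (1 - alpha)) * T2.

End BGKDefs.

From HB Require Import structures.
From mathcomp Require Import all_boot all_order all_algebra.
From mathcomp Require Import all_classical all_reals all_analysis.
From mathcomp Require Import lra.
Set Implicit Arguments.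
Unset Strict Implicit.
Unset Printing Implicit Defensive.
Import Order.TTheory GRing.Theory Num.Theory.
Import numFieldNormedType.Exports.
Local Open Scope classical_set_scope.
Local Open Scope ring_scope.

(* Fix the velocity v and argue by a minimum principle along free transport.
   If f_k(., v, .) ever became nonpositive, continuity, periodicity in x and
   compactness of the closed period box give a first time ts > 0 at which
   min_x f_k(x, v, ts) <= 0, attained at some xs.  There the x-gradient
   vanishes and the t-derivative is <= 0, so the transport operator is <= 0
   at (xs, v, ts).  But the BGK right-hand side nu n (M - f) + nu' n' (M' - f)
   is > 0 there, since the collision rates are positive, M > 0, M' >= 0 and
   f <= 0. *)

Lemma sum_scale_ebase_coord (R : realType) (N : nat) (c : 'I_N -> R) i :
  (\sum_j c j *: ebase j) 0 i = c i.
Proof.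
rewrite summxE (bigD1 i) //= big1 ?addr0 => [|j /negbTE ji].
  by rewrite !mxE !eqxx mulr1.
by rewrite !mxE eq_sym ji andbF mulr0.
Qed.

Section periodic_reduction.
Context {R : realType} {N : nat} (a : 'I_N -> R).

Definition closed_box : set 'rV[R]_N := [set y | forall i, 0 <= y 0 i <= a i].

Lemma closed_box_compact : compact closed_box.
Proof.
have := @rV_compact _ _ (fun i => [set` `[0, a i]%R])
  (fun i => @segment_compact _ _ _).
by congr compact; apply/funext => y /=; under eq_forall do rewrite in_itv.
Qed.

Variables (T : Type) (g : 'rV[R]_N -> T).
Hypothesis a_gt0 : forall i, 0 < a i.
Hypothesis g_periodic : forall i x, g (x + a i *: ebase i) = g x.

Lemma periodic_shift_int i (k : int) x : g (x + (k%:~R * a i) *: ebase i) = g x.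
Proof.
have shift_nat (n : nat) y : g (y + (n%:R * a i) *: ebase i) = g y.
  elim: n y => [|n IH] y; first by rewrite mul0r scale0r addr0.
  by rewrite -[n.+1]addn1 natrD mulrDl mul1r scalerDl addrA g_periodic IH.
case: k => n; first exact: shift_nat.
rewrite NegzE mulrNz mulNr scaleNr.
by rewrite -{2}(subrK (((n.+1)%:R * a i) *: ebase i) x) shift_nat.
Qed.

Lemma periodic_shift_sum (k : 'I_N -> int) x :
  g (x + \sum_i ((k i)%:~R * a i) *: ebase i) = g x.
Proof.
elim/big_rec: _ x => [x|j y _ IH x]; first by rewrite addr0.
by rewrite addrA IH periodic_shift_int.
Qed.

Lemma periodic_reduce x : exists2 y, closed_box y & g y = g x.
Proof.
pose k i := - Num.floor (x 0 i / a i).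
exists (x + \sum_i ((k i)%:~R * a i) *: ebase i); last first.
  exact: periodic_shift_sum.
move=> i; rewrite !mxE sum_scale_ebase_coord /k mulrNz mulNr.
have ai_gt0 := a_gt0 i.
have lo : (Num.floor (x 0 i / a i))%:~R * a i <= x 0 i.
  by rewrite -ler_pdivlMr // floor_le.
have hi : x 0 i < ((Num.floor (x 0 i / a i))%:~R + 1) * a i.
  by rewrite -ltr_pdivrMr // -intrD1 floorD1_gt.
apply/andP; split; nra.
Qed.

End periodic_reduction.

Section first_time.
Context {R : realType} {X : topologicalType} (K : set X) (h : X -> R -> R).
Hypothesis K_compact : compact K.
Hypothesis h_cont :
  {within [set p : X * R | 0 <= p.2], continuous (fun p => h p.1 p.2)}.

Lemma first_nonpos_time x0 t0 : K x0 -> 0 <= t0 -> h x0 t0 <= 0 ->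
  exists ts, [/\ 0 <= ts, exists2 x, K x & h x ts <= 0
               & forall y s, K y -> 0 <= s < ts -> 0 < h y s].
Proof.
move=> Kx0 t0_ge0 hx0.
pose D := [set p : X * R | 0 <= p.2].
pose A := K `*` [set` `[0, t0]%R].
have AD : A `<=` D by move=> [y s] [_ /=]; rewrite in_itv /= => /andP[].
(* h is continuous only on D, so its sublevel set is closed only relative to
   D; V is a closed set with the same trace on D. *)
have [V V_closed VD] : exists2 V, closed V &
    V `&` D = [set p | h p.1 p.2 <= 0] `&` D.
  apply/closed_subspaceP.
  by apply: preimage_closed (@closed_le R 0) => p _; exact: h_cont.
have nonpos_in_V p : A p -> h p.1 p.2 <= 0 -> V p.
  move=> Ap hp; have : ([set p | h p.1 p.2 <= 0] `&` D) p.
    by split; last exact: AD.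
  by rewrite -VD => -[].
pose C := A `&` V.
have C_compact : compact C.
  apply: compact_closedI V_closed.
  exact: compact_setX K_compact (@segment_compact _ _ _).
have C_nonempty : C !=set0.
  have Ax0 : A (x0, t0) by split => //=; rewrite in_itv /= t0_ge0 lexx.
  by exists (x0, t0); split => //; exact: nonpos_in_V.
have time_cont : {within C, continuous (fun p : X * R => p.2)}.
  by apply: continuous_subspaceT => p; exact: cvg_snd.
have [[x ts] /set_mem [[Kx /=]] + VC tsmin] :=
  compact_EVT_min C_nonempty C_compact time_cont.
rewrite in_itv /= => /andP[ts_ge0 ts_le_t0].
exists ts; split => //.
  exists x => //.
  have : (V `&` D) (x, ts) by split.
  by rewrite VD => -[].
move=> y s Ky /andP[s_ge0 s_lt_ts]; rewrite ltNge; apply/negP => hys.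
have Ays : A (y, s).
  by split => //=; rewrite in_itv /= s_ge0 (le_trans (ltW s_lt_ts)).
have /tsmin /= : (y, s) \in C by apply/mem_set; split => //; exact: nonpos_in_V.
by rewrite leNgt s_lt_ts.
Qed.

End first_time.

Lemma min_of_reducible {R : realType} {X : topologicalType} (K : set X)
    (g : X -> R) :
  compact K -> K !=set0 -> {within K, continuous g} ->
  (forall x, exists2 y, K y & g y = g x) -> exists x, forall y, g x <= g y.
Proof.
move=> K_compact K_nonempty g_cont reduce.
have [x _ xmin] := compact_EVT_min K_nonempty K_compact g_cont.
exists x => y; have [y' Ky' <-] := reduce y.
by apply: xmin; exact: mem_set.
Qed.

Lemma derive_eq0_at_min {R : realType} {V : normedModType R} (g : V -> R) x e :
  derivable g x e -> (forall y, g x <= g y) -> 'D_e g x = 0.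
Proof.
move=> dg gmin; apply/eqP; rewrite eq_le; apply/andP; split.
  rewrite ['D_e g x]cvg_at_leftE; last exact: dg.
  apply: limr_le.
    by apply/cvg_ex; eexists; apply: cvg_dnbhs_at_left; exact: dg.
  near=> s; apply: mulr_le0_ge0; last by rewrite subr_ge0 gmin.
  by rewrite invr_le0; apply: ltW; near: s; exists 1 => /=.
rewrite ['D_e g x]cvg_at_rightE; last exact: dg.
apply: limr_ge.
  by apply/cvg_ex; eexists; apply: cvg_dnbhs_at_right; exact: dg.
near=> s; apply: mulr_ge0; last by rewrite subr_ge0 gmin.
by rewrite invr_ge0; apply: ltW; near: s; exists 1 => /=.
Unshelve. all: by end_near. Qed.

Lemma derive1_le0_at_left_min {R : realType} (f : R -> R) b c :
  b < c -> derivable f c 1 -> (forall t, b < t < c -> f c <= f t) ->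
  derive1 f c <= 0.
Proof.
move=> bc df fmin; rewrite derive1E ['D_1 f c]cvg_at_leftE; last exact: df.
apply: limr_le.
  by apply/cvg_ex; eexists; apply: cvg_dnbhs_at_left; exact: df.
near=> s; apply: mulr_le0_ge0.
  by rewrite invr_le0; apply: ltW; near: s; exists 1 => /=.
rewrite subr_ge0 /= [_ *: 1]mulr1; apply: fmin; near: s.
exists (c - b) => /=; first by rewrite subr_gt0.
move=> s; rewrite /= distrC subr0 => /ltr_normlP[] *; apply/andP; split; lra.
Unshelve. all: by end_near. Qed.

Section minimum_principle.
Context {R : realType} {N : nat} (a : 'I_N -> R)
  (F : 'rV[R]_N -> 'rV[R]_N -> R -> R) (v : 'rV[R]_N).
Hypothesis a_gt0 : forall i, 0 < a i.
Hypothesis F_periodic :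
  forall i x t, 0 <= t -> F (x + a i *: ebase i) v t = F x v t.
Hypothesis F_cont : {within [set p : 'rV[R]_N * 'rV[R]_N * R | 0 <= p.2],
  continuous (fun p => F p.1.1 p.1.2 p.2)}.
Hypothesis F0_gt0 : forall x, 0 < F x v 0.
Hypothesis F_smooth : forall x t, 0 < t ->
  derivable (fun s => F x v s) t 1 /\ differentiable (fun y => F y v t) x.
Hypothesis transport_gt0 : forall x t, 0 < t -> F x v t <= 0 ->
  0 < derive1 (fun s => F x v s) t
      + \sum_i v 0 i * 'D_(ebase i) (fun y => F y v t) x.

Lemma transport_positivity x t : 0 <= t -> 0 < F x v t.
Proof.
move=> t_ge0; rewrite ltNge; apply/negP => Fxt.
have reduce s : 0 <= s ->
    forall y, exists2 y', closed_box a y' & F y' v s = F y v s.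
  by move=> s_ge0; apply: periodic_reduce => // i y; exact: F_periodic.
have K_compact : compact (closed_box a `*` [set v]).
  by apply: compact_setX; [exact: closed_box_compact | exact: compact_set1].
have [x0 x0_box Fx0] := reduce t t_ge0 x.
have Fx0_le0 : F x0 v t <= 0 by rewrite Fx0.
have [ts [ts_ge0 [[x1 w] [_ /= ->] Fx1] before]] :=
  first_nonpos_time (h := fun p s => F p.1 p.2 s) (x0 := (x0, v)) K_compact
    F_cont (conj x0_box erefl) t_ge0 Fx0_le0.
have pos_before y s : 0 <= s < ts -> 0 < F y v s.
  move=> /andP[s_ge0 s_lt_ts]; have [y' y'_box <-] := reduce s s_ge0 y.
  by apply: (before (y', v)) => //; rewrite s_ge0.
have ts_gt0 : 0 < ts.
  rewrite lt_def ts_ge0 andbT; apply/eqP => ts0.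
  by move: Fx1; rewrite ts0 leNgt F0_gt0.
have [x2 x2_min] : exists x2, forall y, F x2 v ts <= F y v ts.
  apply: (min_of_reducible (g := fun y => F y v ts)
    (@closed_box_compact _ _ a)).
  - by have [y y_box _] := reduce ts ts_ge0 0; exists y.
  - apply: continuous_subspaceT => y.
    exact/differentiable_continuous/(F_smooth y ts_gt0).2.
  - exact: reduce.
have Fx2 : F x2 v ts <= 0 := le_trans (x2_min x1) Fx1.
have [dt dx] := F_smooth x2 ts_gt0.
have Dx i : 'D_(ebase i) (fun y => F y v ts) x2 = 0.
  by apply: derive_eq0_at_min x2_min; exact: diff_derivable dx.
have Dt : derive1 (fun s => F x2 v s) ts <= 0.
  apply: (derive1_le0_at_left_min ts_gt0 dt) => s /andP[s_gt0 s_lt_ts].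
  by apply: le_trans Fx2 (ltW (pos_before _ _ _)); rewrite (ltW s_gt0).
have := transport_gt0 ts_gt0 Fx2.
rewrite big1 ?addr0 => [|i _]; last by rewrite Dx mulr0.
by rewrite ltNge Dt.
Qed.

End minimum_principle.

Lemma maxw_gt0 {R : realType} n (m nn T : R) (u v : 'rV[R]_n) :
  0 < m -> 0 < nn -> 0 < T -> 0 < maxw m nn T u v.
Proof.
move=> m_gt0 nn_gt0 T_gt0; rewrite /maxw mulr_gt0 ?expR_gt0 ?divr_gt0 //.
by rewrite powR_gt0 // divr_gt0 ?mulr_gt0 ?pi_gt0.
Qed.

Lemma maxw_ge0 {R : realType} n (m nn T : R) (u v : 'rV[R]_n) :
  0 <= nn -> 0 <= maxw m nn T u v.
Proof.
by move=> nn_ge0; rewrite /maxw mulr_ge0 ?expR_ge0 ?divr_ge0 ?powR_ge0.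
Qed.

Lemma relaxation_gt0 {R : realType} (c1 c2 M1 M2 f : R) :
  0 < c1 -> 0 <= c2 -> 0 < M1 -> 0 <= M2 -> f <= 0 ->
  0 < c1 * (M1 - f) + c2 * (M2 - f).
Proof. by move=> *; nra. Qed.

Lemma collision_rate_gt0 {R : realType} (nu nut n1 n2 nk : R) :
  0 < nut -> 0 < n1 -> 0 < n2 -> 0 < nk ->
  nu * nk = nut * nk / (n1 + n2) -> 0 < nu * nk.
Proof. by move=> ? ? ? ? ->; rewrite divr_gt0 ?mulr_gt0 ?addr_gt0. Qed.

Theorem mainTheorem9 (R : realType) (N : nat)
  (m1 m2 eps alpha delta gamma : R) (a : 'I_N -> R)
  (nut11 nut12 nut21 nut22 : R)
  (nu11 nu12 nu21 nu22 : 'rV[R]_N -> R -> R)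
  (f10 f20 : 'rV[R]_N -> 'rV[R]_N -> R)
  (f1 f2 : 'rV[R]_N -> 'rV[R]_N -> R -> R) :
  (* parameters *)
  (1 <= N)%N -> 0 < m1 -> 0 < m2 -> 0 < eps <= 1 -> 0 <= alpha <= 1 ->
  (m1 / m2 * eps - 1) / (1 + m1 / m2 * eps) <= delta <= 1 ->
  0 <= gamma <= m1 / N%:R * (1 - delta)
                * ((1 + m1 / m2 * eps) * delta + 1 - m1 / m2 * eps) ->
  (* (1) periodicity in x, periods a_i > 0 *)
  (forall i, 0 < a i) ->
  (forall i x v, f10 (x + a i *: ebase i) v = f10 x v) ->
  (forall i x v, f20 (x + a i *: ebase i) v = f20 x v) ->
  (forall i x v t, 0 <= t -> f1 (x + a i *: ebase i) v t = f1 x v t) ->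
  (forall i x v t, 0 <= t -> f2 (x + a i *: ebase i) v t = f2 x v t) ->
  (* (2) initial data nonnegative, (1+|v|^2) f_k^0 in L^1(Lambda x R^N),
     total mass one *)
  (forall f0, f0 = f10 \/ f0 = f20 ->
     (forall x v, 0 <= f0 x v) /\
     (iintE (fun x => ((\1_(box a) x : R)%:E *
        iintE (fun v => ((1 + sqn v) * `|f0 x v|)%:E))%E) < +oo)%E /\
     iint (fun x => (\1_(box a) x : R) * iint (fun v => f0 x v)) = 1) ->
  (* (3) weighted sup bound *)
  (exists q : R, N%:R + 2 < q /\ exists A0 : R,
     forall x v, f10 x v * (1 + enorm v `^ q) <= A0 / 2 /\
                 f20 x v * (1 + enorm v `^ q) <= A0 / 2) ->
  (* (4) lower bound on the free-transport densities *)
  (exists C0 : R, 0 < C0 /\ forall x t, 0 <= t ->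
     C0 <= iint (fun v => f10 (x - t *: v) v) /\
     C0 <= iint (fun v => f20 (x - t *: v) v)) ->
  (* (5) collision frequencies *)
  0 < nut11 -> 0 < nut12 -> 0 < nut21 -> 0 < nut22 ->
  (forall x t, 0 <= t ->
     let n1 := dens (fun v => f1 x v t) in
     let n2 := dens (fun v => f2 x v t) in
     nu11 x t * n1 = nut11 * n1 / (n1 + n2) /\
     nu12 x t * n2 = nut12 * n2 / (n1 + n2) /\
     nu21 x t * n1 = nut21 * n1 / (n1 + n2) /\
     nu22 x t * n2 = nut22 * n2 / (n1 + n2)) ->
  (* (f1, f2) is a classical solution *)
  (forall f, f = f1 \/ f = f2 ->
     {within [set p : 'rV[R]_N * 'rV[R]_N * R | 0 <= p.2],
        continuous (fun p => f p.1.1 p.1.2 p.2)} /\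
     (forall x v t, 0 < t ->
        derivable (fun s => f x v s) t 1 /\
        differentiable (fun y => f y v t) x) /\
     (forall x t, 0 <= t ->
        (iintE (fun v => ((1 + sqn v) * `|f x v t|)%:E) < +oo)%E /\
        0 < dens (fun v => f x v t))) ->
  (forall x t, 0 <= t ->
     0 < temp m1 (fun v => f1 x v t) /\ 0 < temp m2 (fun v => f2 x v t)) ->
  (forall x v, f1 x v 0 = f10 x v) ->
  (forall x v, f2 x v 0 = f20 x v) ->
  (forall x v t, 0 < t ->
     let g1 := fun w => f1 x w t in
     let g2 := fun w => f2 x w t in
     let n1 := dens g1 in let n2 := dens g2 in
     let uu1 := veloc g1 in let uu2 := veloc g2 in
     let TT1 := temp m1 g1 in let TT2 := temp m2 g2 in
     let M1 := maxw m1 n1 TT1 uu1 v in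
     let M2 := maxw m2 n2 TT2 uu2 v in
     let M12 := maxw m1 n1 (T12 alpha gamma uu1 uu2 TT1 TT2)
                          (u12 delta uu1 uu2) v in
     let M21 := maxw m2 n2 (T21 m1 m2 eps alpha delta gamma uu1 uu2 TT1 TT2)
                          (u21 m1 m2 eps delta uu1 uu2) v in
     (derive1 (fun s => f1 x v s) t
        + \sum_i v 0 i * 'D_(ebase i) (fun y => f1 y v t) x
      = nu11 x t * n1 * (M1 - f1 x v t) + nu12 x t * n2 * (M12 - f1 x v t)) /\
     (derive1 (fun s => f2 x v s) t
        + \sum_i v 0 i * 'D_(ebase i) (fun y => f2 y v t) x
      = nu22 x t * n2 * (M2 - f2 x v t) + nu21 x t * n1 * (M21 - f2 x v t))) ->
  (* positive initial data *)
  (forall x v, 0 < f10 x v) -> (forall x v, 0 < f20 x v) ->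
  forall x v t, 0 <= t -> 0 < f1 x v t /\ 0 < f2 x v t.
Proof.
(* Only periodicity, regularity and the positivity of the macroscopic
   quantities and collision rates matter; the other assumptions serve the
   existence theory of the paper. *)
move=> _ m1_gt0 m2_gt0 _ _ _ _ a_gt0 _ _ f1_periodic f2_periodic _ _ _
  nut11_gt0 nut12_gt0 nut21_gt0 nut22_gt0 nu_def classical temp_gt0
  f1_init f2_init bgk f10_gt0 f20_gt0 x v t t_ge0.
have [f1_cont [f1_smooth f1_macro]] := classical f1 (or_introl erefl).
have [f2_cont [f2_smooth f2_macro]] := classical f2 (or_intror erefl).
have macro_gt0 y s : 0 < s -> [/\ 0 < dens (fun w => f1 y w s),
    0 < dens (fun w => f2 y w s), 0 < temp m1 (fun w => f1 y w s)
    & 0 < temp m2 (fun w => f2 y w s)].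
  move=> /ltW s_ge0; have [? ?] := temp_gt0 y s s_ge0.
  by split=> //; [case: (f1_macro y s s_ge0) | case: (f2_macro y s s_ge0)].
split.
- apply: (transport_positivity a_gt0) => // [i y s|y|y s|y s s_gt0 f1_le0].
  + exact: f1_periodic.
  + by rewrite f1_init.
  + exact: f1_smooth.
  have [n1_gt0 n2_gt0 T1_gt0 _] := macro_gt0 y s s_gt0.
  have [nu11_def [nu12_def _]] := nu_def y s (ltW s_gt0).
  have [-> _] := bgk y v s s_gt0.
  apply: relaxation_gt0 f1_le0; rewrite ?maxw_gt0 ?maxw_ge0 ?(ltW n1_gt0) //.
    exact: collision_rate_gt0 nu11_def.
  exact/ltW/(collision_rate_gt0 _ _ _ _ nu12_def).
- apply: (transport_positivity a_gt0) => // [i y s|y|y s|y s s_gt0 f2_le0].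
  + exact: f2_periodic.
  + by rewrite f2_init.
  + exact: f2_smooth.
  have [n1_gt0 n2_gt0 _ T2_gt0] := macro_gt0 y s s_gt0.
  have [_ [_ [nu21_def nu22_def]]] := nu_def y s (ltW s_gt0).
  have [_ ->] := bgk y v s s_gt0.
  apply: relaxation_gt0 f2_le0; rewrite ?maxw_gt0 ?maxw_ge0 ?(ltW n2_gt0) //.
    exact: collision_rate_gt0 nu22_def.
  exact/ltW/(collision_rate_gt0 _ _ _ _ nu21_def).
Qed.
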